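(* Assume the setting described in the context. Let $\hat{\mathcal{D}}=\{\Delta\in\mathcal{D}:\Delta_j\in\{\Delta_j^-,\Delta_j^+\}\ \text{for all } j\}$ be the set of the $2^m$ vertices of $\mathcal{D}$, enumerated as $\Delta^{(1)},\dots,\Delta^{(2^m)}$, and let $p_i(\kappa)=\det[-(B\Delta^{(i)}C+\kappa^2J_2+\kappa^4J_4)]$. Then for all $\kappa\ge0$, $\Psi^-(\kappa)=\min_i p_i(\kappa)$ and $\Psi^+(\kappa)=\max_i p_i(\kappa)$. Moreover, $\Psi^-$ and $\Psi^+$ are piecewise polynomial: there exist finitely many values $\kappa_1<\kappa_2<\dots<\kappa_M$ such that $\Psi^-$ (and analogously $\Psi^+$) coincides with a polynomial on each interval $[\kappa_h,\kappa_{h+1}]$ (and on the unbounded end intervals); in particular they are piecewise differentiable.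
   Context: Let $n,m\ge 1$, $B\in\mathbb{Z}^{n\times m}$, $C\in\mathbb{Z}^{m\times n}$, and $J_2,J_4\in\mathbb{R}^{n\times n}$ symmetric. Given bounds $0\le \Delta_j^-\le \Delta_j^+<\infty$ ($j=1,\dots,m$), $\mathcal{D}$ is the set of diagonal matrices $\Delta=\mathrm{diag}(\Delta_1,\dots,\Delta_m)$ with $\Delta_j^-\le\Delta_j\le\Delta_j^+$. For real $\kappa\ge0$, $\Psi^-(\kappa)=\min_{\Delta\in\mathcal{D}}\det[-(B\Delta C+\kappa^2J_2+\kappa^4J_4)]$ and $\Psi^+(\kappa)=\max_{\Delta\in\mathcal{D}}\det[-(B\Delta C+\kappa^2J_2+\kappa^4J_4)]$. *)

From HB Require Import structures.
From mathcomp Require Import all_boot all_order all_algebra.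
From mathcomp Require Import all_classical all_reals.
Set Implicit Arguments. Unset Strict Implicit. Unset Printing Implicit Defensive.
Import Order.TTheory GRing.Theory Num.Theory.
Local Open Scope classical_set_scope.
Local Open Scope ring_scope.

Definition Mk (R : realType) (n m : nat) (B : 'M[int]_(n, m)) (C : 'M[int]_(m, n))
  (J2 J4 : 'M[R]_n) (d : 'rV[R]_m) (k : R) : 'M[R]_n :=
  - (map_mx (fun z : int => z%:~R) B *m diag_mx d *m map_mx (fun z : int => z%:~R) C
     + k ^+ 2 *: J2 + k ^+ 4 *: J4).

Definition inD (R : realType) (m : nat) (dm dp : 'I_m -> R) (d : 'rV[R]_m) : Prop :=
  forall j, dm j <= d 0 j <= dp j.

Definition vertex (R : realType) (m : nat) (dm dp : 'I_m -> R) (b : {ffun 'I_m -> bool})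
  : 'rV[R]_m := \row_j (if b j then dp j else dm j).

(* Psi^-(k) = min over D (written as inf of the set of attained values) *)
Definition Psi_minus (R : realType) (n m : nat) (B : 'M[int]_(n, m)) (C : 'M[int]_(m, n))
  (J2 J4 : 'M[R]_n) (dm dp : 'I_m -> R) (k : R) : R :=
  inf [set \det (Mk B C J2 J4 d k) | d in [set d | inD dm dp d]].

Definition Psi_plus (R : realType) (n m : nat) (B : 'M[int]_(n, m)) (C : 'M[int]_(m, n))
  (J2 J4 : 'M[R]_n) (dm dp : 'I_m -> R) (k : R) : R :=
  sup [set \det (Mk B C J2 J4 d k) | d in [set d | inD dm dp d]].

Definition pvert (R : realType) (n m : nat) (B : 'M[int]_(n, m)) (C : 'M[int]_(m, n))
  (J2 J4 : 'M[R]_n) (dm dp : 'I_m -> R) (b : {ffun 'I_m -> bool}) (k : R) : R :=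
  \det (Mk B C J2 J4 (vertex dm dp b) k).

(* f is piecewise polynomial on [0, +oo): finitely many breakpoints
   s_0 < s_1 < ... < s_{M-1}, and polynomials ps_0, ..., ps_M such that f agrees
   with ps_h on the h-th piece (0 <= h <= M): piece 0 is [0, s_0] (restricted to
   k >= 0), piece h is [s_{h-1}, s_h], piece M is [s_{M-1}, +oo). *)
Definition piecewise_poly_nonneg (R : realType) (f : R -> R) : Prop :=
  exists (s : seq R) (ps : seq {poly R}),
    [/\ sorted <%R s, size ps = (size s).+1 &
        forall (k : R) (h : nat), 0 <= k -> (h <= size s)%N ->
          ((0 < h)%N -> s`_(h.-1) <= k) -> ((h < size s)%N -> k <= s`_h) ->
          f k = (ps`_h).[k]].

(* For fixed k, Delta |-> det[-(B Delta C + k^2 J2 + k^4 J4)] is affine in each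
   Delta_j separately, since Delta_j only enters through the rank-one term
   Delta_j (col j B)(row j C).  Moving one coordinate at a time to the better
   endpoint of its interval shows that the extrema over the box D are attained at
   vertices.  Each vertex determinant p_b is a polynomial in k, so Psi^- and Psi^+
   are the lower and upper envelopes of finitely many polynomials.  Between
   consecutive real roots of the product of all nonzero differences p_b - p_b', no
   two of the p_b cross (intermediate value theorem), so a single p_b realises the
   envelope on each piece. *)

From HB Require Import structures.
From mathcomp Require Import all_boot all_order all_algebra.
From mathcomp Require Import all_classical all_reals.
From mathcomp Require Import polyrcf lra.
Import Order.TTheory GRing.Theory Num.Theory.
Set Implicit Arguments. Unset Strict Implicit. Unset Printing Implicit Defensive.
Local Open Scope ring_scope.

Definition set_entry (T : Type) (m : nat) (d : 'rV[T]_m) (j : 'I_m) (t : T) : 'rV[T]_m :=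
  \row_i (if i == j then t else d 0 i).

Lemma set_entry_id (T : Type) (m : nat) (d : 'rV[T]_m) j : set_entry d j (d 0 j) = d.
Proof. by apply/rowP => i; rewrite mxE; case: eqP => [->|]. Qed.

Definition coordwise_affine (R : pzRingType) (m : nat) (F : 'rV[R]_m -> R) :=
  forall d j, exists a b : R, forall t, F (set_entry d j t) = a + t * b.

Lemma det_add_rank1 (R : comNzRingType) n (A : 'M[R]_n) (u : 'cV[R]_n) (v : 'rV[R]_n) :
  exists a b : R, forall t, \det (A + t *: (u *m v)) = a + t * b.
Proof.
(* [X t] is block-triangularly equivalent to [A + t *: (u *m v)], and [t] only
   occurs in its first row. *)
pose X t : 'M[R]_(1 + n) := block_mx 1%:M (- (t *: v)) u A.
exists (\det (X 0)), (\det (block_mx 0 (- v) u A)) => t.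
have -> : \det (A + t *: (u *m v)) = \det (X t).
  have -> : X t = block_mx 1%:M 0 u 1%:M *m block_mx 1%:M (- (t *: v)) 0 (A + t *: (u *m v)).
    rewrite mulmx_block !mul1mx !mulmx0 !mul0mx !addr0 mulmx1.
    by rewrite mulmxN -scalemxAr addrCA addNr addr0.
  by rewrite det_mulmx det_lblock det_ublock !det1 !mul1r.
have row'_top (a a' : 'M_1) (b b' : 'rV_n) :
    row' (lshift n 0) (block_mx a b u A) = row' (lshift n 0) (block_mx a' b' u A).
  apply/matrixP => i j; rewrite !mxE; case: splitP => // k.
  by rewrite ord1 /= /bump.
rewrite -[\det (X 0)]mul1r; apply: (determinant_multilinear (i0 := lshift n 0)).
- rewrite /X /block_mx !rowKu scale1r !row_id scale_row_mx add_row_mx.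
  by rewrite scaler0 addr0 scale0r oppr0 add0r scalerN.
- exact: row'_top.
- exact: row'_top.
Qed.

Lemma diag_mx_set_entry (R : pzSemiRingType) m (d : 'rV[R]_m) j t :
  diag_mx (set_entry d j t) = diag_mx (set_entry d j 0) + t *: delta_mx j j.
Proof.
apply/matrixP => a b; rewrite !mxE.
case: (eqVneq a j) => [->|_] /=; last by rewrite mulr0 addr0.
by rewrite mul0rn add0r eq_sym; case: eqP; rewrite ?mulr1 ?mulr0.
Qed.

Lemma det_diag_affine (R : comNzRingType) n m (A : 'M[R]_n) (B : 'M[R]_(n, m))
    (C : 'M[R]_(m, n)) :
  coordwise_affine (fun d => \det (A + B *m diag_mx d *m C)).
Proof.
move=> d j; have [a [b affine]] :=
  det_add_rank1 (A + B *m diag_mx (set_entry d j 0) *m C) (col j B) (row j C).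
exists a, b => t; rewrite -affine diag_mx_set_entry mulmxDr mulmxDl addrA.
by rewrite colE rowE -!scalemxAr -!scalemxAl !mulmxA -(mulmxA B (delta_mx j 0)) mul_delta_mx.
Qed.

Lemma affine_endpoint_le (R : realDomainType) (a b lo hi t : R) :
  lo <= t <= hi -> a + (if 0 <= b then lo else hi) * b <= a + t * b.
Proof.
case/andP=> lo_t t_hi; rewrite lerD2l.
by case: ifPn => [b_ge0|/negP b_lt0]; [rewrite ler_wpM2r | rewrite ler_wnM2r //; lra].
Qed.

Lemma vertex_inD (R : realType) m (dm dp : 'I_m -> R) b :
  (forall j, dm j <= dp j) -> inD dm dp (vertex dm dp b).
Proof. by move=> dmp j; rewrite mxE; case: ifP => _; rewrite lexx dmp. Qed.

Lemma affine_endpoint_step (R : realType) m (dm dp : 'I_m -> R) (F : 'rV[R]_m -> R)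
    (d : 'rV[R]_m) j :
    coordwise_affine F -> dm j <= d 0 j <= dp j ->
  exists2 t, t = dm j \/ t = dp j & F (set_entry d j t) <= F d.
Proof.
move=> affF d_j; have [a [b affine]] := affF d j.
exists (if 0 <= b then dm j else dp j); first by case: ifP; [left|right].
by rewrite -{2}(set_entry_id d j) !affine affine_endpoint_le.
Qed.

Lemma set_entry_inD (R : realType) m (dm dp : 'I_m -> R) (d : 'rV[R]_m) j t :
  inD dm dp d -> dm j <= t <= dp j -> inD dm dp (set_entry d j t).
Proof. by move=> d_in t_j i; rewrite mxE; case: eqP => [->|_]. Qed.

Lemma endpoints_vertex (R : realType) m (dm dp : 'I_m -> R) (d : 'rV[R]_m) :
  (forall j, d 0 j = dm j \/ d 0 j = dp j) -> exists b, vertex dm dp b = d.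
Proof.
move=> d_end; exists [ffun j => d 0 j == dp j].
by apply/rowP => j; rewrite mxE ffunE; case: eqP => [->|] //; case: (d_end j).
Qed.

Lemma box_vertex_le (R : realType) m (dm dp : 'I_m -> R) (F : 'rV[R]_m -> R) :
    (forall j, dm j <= dp j) -> coordwise_affine F ->
  forall d, inD dm dp d -> exists b, F (vertex dm dp b) <= F d.
Proof.
move=> dmp affF d d_in.
suff /(_ m (leqnn m)) [d' [_ d'_end le_d'd]] : forall l, (l <= m)%N -> exists d',
    [/\ inD dm dp d', forall j : 'I_m, (j < l)%N -> d' 0 j = dm j \/ d' 0 j = dp j
      & F d' <= F d].
  have [b vertex_b] := endpoints_vertex (fun j => d'_end j (ltn_ord j)).
  by exists b; rewrite vertex_b.
elim=> [_|l IHl lt_lm]; first by exists d.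
have [d' [d'_in d'_end le_d'd]] := IHl (ltnW lt_lm); pose j := Ordinal lt_lm.
have [t t_end le_td'] := affine_endpoint_step affF (d'_in j).
have t_j : dm j <= t <= dp j by case: t_end => ->; rewrite lexx dmp.
exists (set_entry d' j t); split; [exact: set_entry_inD | | exact: le_trans le_td' le_d'd].
move=> i; rewrite mxE; case: eqP => [-> //|ne].
by rewrite ltnS leq_eqVlt => /orP[/eqP ij|/d'_end //]; case: ne; apply: val_inj.
Qed.

Lemma coordwise_affineN (R : pzRingType) m (F : 'rV[R]_m -> R) :
  coordwise_affine F -> coordwise_affine (fun d => - F d).
Proof.
move=> affF d j; have [a [b affine]] := affF d j.
by exists (- a), (- b) => t; rewrite affine opprD mulrN.
Qed.

Lemma box_vertex_ge (R : realType) m (dm dp : 'I_m -> R) (F : 'rV[R]_m -> R) :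
    (forall j, dm j <= dp j) -> coordwise_affine F ->
  forall d, inD dm dp d -> exists b, F d <= F (vertex dm dp b).
Proof.
move=> dmp /coordwise_affineN affNF d /(box_vertex_le dmp affNF) [b le_b].
by exists b; rewrite -lerN2.
Qed.

Lemma inf_attained (R : realType) (E : set R) x : E x -> lbound E x -> inf E = x.
Proof.
move=> Ex lbx; apply/le_anti/andP; split; last by apply: lb_le_inf => //; exists x.
by apply: ge_inf => //; exists x.
Qed.

Lemma sup_attained (R : realType) (E : set R) x : E x -> ubound E x -> sup E = x.
Proof.
move=> Ex ubx; apply/le_anti/andP; split; first by apply: ge_sup => //; exists x.
by apply: ub_le_sup => //; exists x.
Qed.

Lemma poly_root_between (R : rcfType) (g : {poly R}) x y : g.[x] * g.[y] < 0 ->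
  exists c, root g c /\ (x < c < y \/ y < c < x).
Proof.
case: (leP x y) => [le_xy|lt_yx] neg.
  by have [c c_in root_c] := poly_ivtoo le_xy neg; exists c; rewrite in_itv /= in c_in; auto.
rewrite mulrC in neg; have [c c_in root_c] := poly_ivtoo (ltW lt_yx) neg.
by exists c; rewrite in_itv /= in c_in; auto.
Qed.

Lemma lower_envelope_piece (R : rcfType) (I : finType) (i0 : I) (P : I -> {poly R})
    (Q : R -> Prop) :
    (forall x z y, Q x -> Q y -> x < z < y ->
       forall i j, P i != P j -> ~~ root (P i - P j) z) ->
  exists i, forall k, Q k -> forall j, (P i).[k] <= (P j).[k].
Proof.
move=> no_cross.
have [[x [y [Qx Qy lt_xy]]]|degenerate] :=
  pselect (exists x y, [/\ Q x, Q y & x < y]); last first.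
  have [[k0 Qk0]|empty] := pselect (exists k, Q k); last first.
    by exists i0 => k Qk; case: empty; exists k.
  have [i _ min_i] := @arg_minP _ _ _ i0 xpredT (fun i => (P i).[k0]) erefl.
  exists i => k Qk j; case: (ltgtP k k0) => [lt_kk0|lt_k0k|-> //]; last exact: min_i.
  - by case: degenerate; exists k, k0.
  - by case: degenerate; exists k0, k.
(* A minimiser at an interior point stays minimal on Q: otherwise the intermediate
   value theorem produces a crossing strictly inside Q. *)
pose t := (x + y) / 2; have [lt_xt lt_ty] : x < t /\ t < y by split; rewrite /t; lra.
have [i _ min_i] := @arg_minP _ _ _ i0 xpredT (fun i => (P i).[t]) erefl.
exists i => k Qk j; rewrite leNgt; apply/negP => lt_ji.
have neq_ij : P i != P j by apply: contraTneq lt_ji => ->; rewrite ltxx.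
have lt_t : (P i - P j).[t] < 0.
  rewrite lt_neqAle hornerD hornerN subr_le0 min_i // andbT.
  by rewrite -hornerN -hornerD; apply: (no_cross x t y) => //; rewrite lt_xt.
have gt_k : 0 < (P i - P j).[k] by rewrite hornerD hornerN subr_gt0.
have sign_change : (P i - P j).[t] * (P i - P j).[k] < 0 by rewrite pmulr_llt0.
have [c [root_c [/andP[lt_tc lt_ck]|/andP[lt_kc lt_ct]]]] := poly_root_between sign_change.
- by move: root_c; apply/negP/(no_cross x c k); rewrite ?(lt_trans lt_xt lt_tc) ?lt_ck.
- by move: root_c; apply/negP/(no_cross k c y); rewrite ?lt_kc ?(lt_trans lt_ct lt_ty).
Qed.

Definition in_piece (R : numDomainType) (s : seq R) (h : nat) (k : R) : Prop :=
  ((0 < h)%N -> s`_h.-1 <= k) /\ ((h < size s)%N -> k <= s`_h).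

Lemma in_piece_gap (R : realDomainType) (s : seq R) h x z y :
    sorted <%R s -> (h <= size s)%N -> in_piece s h x -> in_piece s h y ->
  x < z < y -> z \notin s.
Proof.
move=> s_sorted h_le [x_lo _] [_ y_hi] /andP[lt_xz lt_zy]; apply/negP => z_in.
have z_nth : s`_(index z s) = z := nth_index 0 z_in.
have idx_lt : (index z s < size s)%N by rewrite index_mem.
have mono := lt_sorted_leq_nth 0 s_sorted.
case: (ltnP (index z s) h) => [lt_idx_h|le_h_idx].
  case: h h_le x_lo y_hi lt_idx_h => // h h_le x_lo _ le_idx_h.
  have : z <= s`_h by rewrite -z_nth mono ?inE.
  by have := x_lo erefl; lra.
have : s`_h <= z by rewrite -z_nth mono ?inE //; apply: leq_ltn_trans idx_lt.
by have := y_hi (leq_ltn_trans le_h_idx idx_lt); lra.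
Qed.

Lemma lower_envelope_piecewise_poly (R : realType) (I : finType) (P : I -> {poly R})
    (f : R -> R) :
    (forall k, exists i, f k = (P i).[k] /\ forall j, f k <= (P j).[k]) ->
  piecewise_poly_nonneg f.
Proof.
move=> envelope; have [i0 _] := envelope 0.
pose q := \prod_(ij : I * I | P ij.1 != P ij.2) (P ij.1 - P ij.2).
have q_neq0 : q != 0 by apply/prodf_neq0 => ij; rewrite subr_eq0.
pose s := rootsR q.
have s_sorted : sorted <%R s := sorted_roots _ _ q.
have no_cross z i j : z \notin s -> P i != P j -> ~~ root (P i - P j) z.
  rewrite -(roots_on_rootsR q_neq0) /= rootE horner_prod => /prodf_neq0 cross neq_ij.
  exact: (cross (i, j)).
have piece_poly (h : 'I_(size s).+1) :
    exists p : {poly R}, forall k, in_piece s h k -> f k = p.[k].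
  have [|i min_i] := @lower_envelope_piece _ _ i0 P (in_piece s h).
    move=> x z y x_in y_in xzy i j; apply/no_cross/(in_piece_gap s_sorted _ x_in y_in xzy).
    by rewrite -ltnS.
  exists (P i) => k k_in; have [j [-> min_j]] := envelope k.
  by apply/le_anti; rewrite min_j min_i.
have [pick pick_spec] := fin_all_exists piece_poly.
exists s, (mkseq (fun h => pick (inord h)) (size s).+1); split; rewrite ?size_mkseq //.
move=> k h _ h_le lo hi; rewrite nth_mkseq ?ltnS //.
by apply: pick_spec; rewrite inordK ?ltnS //; split.
Qed.

Lemma piecewise_poly_nonnegN (R : realType) (f : R -> R) :
  piecewise_poly_nonneg f -> piecewise_poly_nonneg (fun k => - f k).
Proof.
move=> [s [ps [s_sorted size_ps f_pieces]]].
exists s, [seq - p | p <- ps]; split; rewrite ?size_map //.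
move=> k h k_ge0 h_le lo hi; rewrite (nth_map 0) ?size_ps ?ltnS //.
by rewrite hornerN (f_pieces k h).
Qed.

Lemma upper_envelope_piecewise_poly (R : realType) (I : finType) (P : I -> {poly R})
    (f : R -> R) :
    (forall k, exists i, f k = (P i).[k] /\ forall j, (P j).[k] <= f k) ->
  piecewise_poly_nonneg f.
Proof.
move=> envelope; rewrite -[f]/(fun k => f k) -(funext (fun k => opprK (f k))).
apply/piecewise_poly_nonnegN/(@lower_envelope_piecewise_poly _ _ (fun i => - P i)) => k.
have [i [-> max_i]] := envelope k.
by exists i; split=> [|j]; rewrite !hornerN // lerN2.
Qed.

Section VertexExtrema.
Variables (R : realType) (n m : nat) (B : 'M[int]_(n, m)) (C : 'M[int]_(m, n)).
Variables (J2 J4 : 'M[R]_n) (dm dp : 'I_m -> R).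
Hypothesis dmp : forall j, dm j <= dp j.

Lemma det_Mk_affine k : coordwise_affine (fun d => \det (Mk B C J2 J4 d k)).
Proof.
move=> d j; have [a [b affine]] := det_diag_affine (- (k ^+ 2 *: J2 + k ^+ 4 *: J4))
  (- map_mx (fun z : int => z%:~R) B) (map_mx (fun z : int => z%:~R) C) d j.
by exists a, b => t; rewrite -affine /Mk !mulNmx -opprD [in RHS](addrC (_ + _)) addrA.
Qed.

Lemma Psi_minus_vertex k : exists b0, Psi_minus B C J2 J4 dm dp k = pvert B C J2 J4 dm dp b0 k
  /\ forall b, pvert B C J2 J4 dm dp b0 k <= pvert B C J2 J4 dm dp b k.
Proof.
have [b0 _ min_b0] := @arg_minP _ _ _ [ffun=> false] xpredT
  (fun b => pvert B C J2 J4 dm dp b k) erefl.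
exists b0; split=> [|b]; last exact: min_b0.
apply: inf_attained; first by exists (vertex dm dp b0); first exact: vertex_inD.
move=> _ [d d_in <-]; have [b le_b] := box_vertex_le dmp (det_Mk_affine k) d_in.
exact: le_trans (min_b0 b _) le_b.
Qed.

Lemma Psi_plus_vertex k : exists b0, Psi_plus B C J2 J4 dm dp k = pvert B C J2 J4 dm dp b0 k
  /\ forall b, pvert B C J2 J4 dm dp b k <= pvert B C J2 J4 dm dp b0 k.
Proof.
have [b0 _ max_b0] := @arg_maxP _ _ _ [ffun=> false] xpredT
  (fun b => pvert B C J2 J4 dm dp b k) erefl.
exists b0; split=> [|b]; last exact: max_b0.
apply: sup_attained; first by exists (vertex dm dp b0); first exact: vertex_inD.
move=> _ [d d_in <-]; have [b le_b] := box_vertex_ge dmp (det_Mk_affine k) d_in.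
exact: le_trans le_b (max_b0 b _).
Qed.

Lemma pvert_poly b : exists p : {poly R}, forall k, pvert B C J2 J4 dm dp b k = p.[k].
Proof.
pose A := map_mx (fun z : int => z%:~R) B *m diag_mx (vertex dm dp b) *m
          map_mx (fun z : int => z%:~R) C.
exists (\det (- (map_mx polyC A + 'X^2 *: map_mx polyC J2 + 'X^4 *: map_mx polyC J4))) => k.
rewrite -horner_evalE -det_map_mx; congr (\det _).
by apply/matrixP => i j; rewrite !mxE /= horner_evalE !hornerE.
Qed.

End VertexExtrema.

Theorem proposition1 (R : realType) (n m : nat) (hn : (0 < n)%N) (hm : (0 < m)%N)
  (B : 'M[int]_(n, m)) (C : 'M[int]_(m, n)) (J2 J4 : 'M[R]_n)
  (hJ2 : J2^T = J2) (hJ4 : J4^T = J4)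
  (dm dp : 'I_m -> R) (hdm : forall j, 0 <= dm j) (hdmp : forall j, dm j <= dp j) :
  (forall k : R, 0 <= k ->
     [/\ (forall b, Psi_minus B C J2 J4 dm dp k <= pvert B C J2 J4 dm dp b k),
         (exists b, Psi_minus B C J2 J4 dm dp k = pvert B C J2 J4 dm dp b k),
         (forall b, pvert B C J2 J4 dm dp b k <= Psi_plus B C J2 J4 dm dp k) &
         (exists b, Psi_plus B C J2 J4 dm dp k = pvert B C J2 J4 dm dp b k)])
  /\ piecewise_poly_nonneg (Psi_minus B C J2 J4 dm dp)
  /\ piecewise_poly_nonneg (Psi_plus B C J2 J4 dm dp).
Proof.
have [P pvertE] := fin_all_exists (pvert_poly B C J2 J4 dm dp).
split; [move=> k _ | split].
- have [b0 [-> min_b0]] := Psi_minus_vertex B C J2 J4 hdmp k.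
  have [b1 [-> max_b1]] := Psi_plus_vertex B C J2 J4 hdmp k.
  by split; [exact: min_b0 | exists b0 | exact: max_b1 | exists b1].
- apply: (lower_envelope_piecewise_poly (P := P)) => k.
  have [b0 [-> min_b0]] := Psi_minus_vertex B C J2 J4 hdmp k.
  by exists b0; split=> [|b]; rewrite -!pvertE.
- apply: (upper_envelope_piecewise_poly (P := P)) => k.
  have [b1 [-> max_b1]] := Psi_plus_vertex B C J2 J4 hdmp k.
  by exists b1; split=> [|b]; rewrite -!pvertE.
Qed.
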